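(* Let $(M,\Sigma_M,\mu,T)$ be an ergodic measure-preserving deterministic system. Assume there do not exist $n\in\mathbb{N}$ and $C\in\Sigma_M$ with $0<\mu(C)<1$ such that $\mu\big(T^n(C)\,\triangle\, C\big)=0$. Let $\Phi:M\to M_O$ be any nontrivial finite-valued observation function, and let $Z_t:=\Phi\circ T^t$, $t\in\mathbb{Z}$. Then there is an observed value $o_i\in M_O$ such that for every $o_j\in M_O$ and every $t\in\mathbb{Z}$, $$P\{Z_{t+1}=o_j\mid Z_t=o_i\}:=\frac{\mu(\{m: \Phi(T^{t}m)=o_i,\ \Phi(T^{t+1}m)=o_j\})}{\mu(\{m:\Phi(T^t m)=o_i\})}<1.$$
   Context: A deterministic system is a quadruple $(M,\Sigma_M,\mu,T)$ where $(M,\Sigma_M,\mu)$ is a (complete) probability space and $T:M\to M$ is a bijection such that $T$ and $T^{-1}$ are measurable. It is measure-preserving if $\mu(T(A))=\mu(A)$ for all $A\in\Sigma_M$. It is ergodic if every $A\in\Sigma_M$ with $\mu(T(A)\triangle A)=0$ has $\mu(A)\in\{0,1\}$ (equivalently, $\lim_{n\to\infty}\frac1n\sum_{i=0}^{n-1}(\mu(T^i(A)\cap B)-\mu(A)\mu(B))=0$ for all $A,B\in\Sigma_M$). A partition of $(M,\Sigma_M,\mu)$ is a finite set $\alpha=\{\alpha_1,\dots,\alpha_n\}$ of pairwise disjoint sets $\alpha_i\in\Sigma_M$ with $\mu(\alpha_i)>0$ and $\bigcup_i\alpha_i=M$; it is nontrivial if $n\ge 2$. A finite-valued observation function is a map $\Phi=\sum_{i=1}^n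 o_i\chi_{\alpha_i}$ for some partition $\alpha$ and distinct values $o_1,\dots,o_n$, with $M_O=\{o_1,\dots,o_n\}$; it is nontrivial if its partition is nontrivial. *)

From Stdlib Require Import Reals ZArith.
Open Scope R_scope.

Definition set (M : Type) := M -> Prop.
Definition setT {M} : set M := fun _ => True.
Definition set0 {M} : set M := fun _ => False.
Definition setC {M} (A : set M) : set M := fun x => ~ A x.
Definition setI {M} (A B : set M) : set M := fun x => A x /\ B x.
Definition setD {M} (A B : set M) : set M := fun x => A x /\ ~ B x.
Definition setU {M} (A B : set M) : set M := fun x => A x \/ B x.
Definition symdiff {M} (A B : set M) : set M := setU (setD A B) (setD B A).
Definition bigcup {M} (A : nat -> set M) : set M := fun x => exists n, A n x.
Definition subset {M} (A B : set M) : Prop := forall x, A x -> B x.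
Definition image {M} (T : M -> M) (A : set M) : set M :=
  fun y => exists x, A x /\ T x = y.
Definition preimage {M} (T : M -> M) (A : set M) : set M := fun x => A (T x).

Definition is_sigma_algebra {M} (S : set M -> Prop) : Prop :=
  S setT /\
  (forall A, S A -> S (setC A)) /\
  (forall A : nat -> set M, (forall n, S (A n)) -> S (bigcup A)).

Definition is_probability_measure {M} (S : set M -> Prop) (mu : set M -> R) : Prop :=
  (forall A, S A -> 0 <= mu A) /\
  mu set0 = 0 /\
  mu setT = 1 /\
  (forall A : nat -> set M,
      (forall n, S (A n)) ->
      (forall n m, n <> m -> forall x, A n x -> A m x -> False) ->
      infinite_sum (fun n => mu (A n)) (mu (bigcup A))).

Definition is_complete {M} (S : set M -> Prop) (mu : set M -> R) : Prop :=
  forall A B, S B -> mu B = 0 -> subset A B -> S A.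

Definition probability_space {M} (S : set M -> Prop) (mu : set M -> R) : Prop :=
  is_sigma_algebra S /\ is_probability_measure S mu /\ is_complete S mu.

Definition bimeasurable_bijection {M} (S : set M -> Prop) (T Tinv : M -> M) : Prop :=
  (forall x, Tinv (T x) = x) /\ (forall y, T (Tinv y) = y) /\
  (forall A, S A -> S (preimage T A)) /\
  (forall A, S A -> S (preimage Tinv A)).

Definition measure_preserving {M} (S : set M -> Prop) (mu : set M -> R) (T : M -> M) : Prop :=
  forall A, S A -> mu (image T A) = mu A.

Definition ergodic {M} (S : set M -> Prop) (mu : set M -> R) (T : M -> M) : Prop :=
  forall A, S A -> mu (symdiff (image T A) A) = 0 -> mu A = 0 \/ mu A = 1.

Fixpoint iterT {M} (n : nat) (f : M -> M) (x : M) : M :=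
  match n with O => x | S k => f (iterT k f x) end.

Definition Tpow {M} (T Tinv : M -> M) (t : Z) : M -> M :=
  match t with
  | Z0 => fun x => x
  | Zpos p => iterT (Pos.to_nat p) T
  | Zneg p => iterT (Pos.to_nat p) Tinv
  end.

Definition nontrivial_finite_observation {M O : Type} (S : set M -> Prop)
  (mu : set M -> R) (Phi : M -> O) (n : nat) (o : nat -> O) : Prop :=
  (2 <= n)%nat /\
  (forall i j, (i < n)%nat -> (j < n)%nat -> o i = o j -> i = j) /\
  (forall m, exists i, (i < n)%nat /\ Phi m = o i) /\
  (forall i, (i < n)%nat -> S (fun m => Phi m = o i) /\ 0 < mu (fun m => Phi m = o i)).

Definition trans_prob {M O : Type} (mu : set M -> R) (T Tinv : M -> M)
  (Phi : M -> O) (t : Z) (oi oj : O) : R :=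
  mu (fun m => Phi (Tpow T Tinv t m) = oi /\ Phi (Tpow T Tinv (t + 1) m) = oj)
  / mu (fun m => Phi (Tpow T Tinv t m) = oi).

From Stdlib Require Import Reals ZArith Lra Lia Classical ClassicalEpsilon
  FunctionalExtensionality PropExtensionality.
Open Scope R_scope.

(* Suppose, for contradiction, that every observed value o_i admits a
   successor o_j and a time t with P{Z_{t+1} = o_j | Z_t = o_i} >= 1.  By
   stationarity this conditional probability is
   mu(alpha_i /\ T^-1 alpha_j) / mu(alpha_i), so alpha_i is almost surely
   contained in T^-1 alpha_j.  Choosing such a successor f(i) for every i
   gives a self-map f of {0, ..., n-1}, which has a periodic point c of some
   period K >= 1.  Chaining the almost-sure inclusions along the orbit of c
   gives alpha_c contained in T^-K alpha_c almost surely; as T^-K preserves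
   measure the inclusion is an almost-sure equality, i.e.
   mu(T^K alpha_c /\ alpha_c) = 0.  Since 0 < mu(alpha_c) < 1 (there is a
   second level set of positive measure), this contradicts aperiodicity. *)

Lemma set_ext {M} (A B : set M) : (forall x, A x <-> B x) -> A = B.
Proof.
  intro H; apply functional_extensionality; intro x.
  apply propositional_extensionality, H.
Qed.

Definition level {M O : Type} (Phi : M -> O) (a : O) : set M :=
  fun m => Phi m = a.

(* The sequence A, B, empty, empty, ...: a finite union seen as a countable one. *)
Definition pair_seq {M} (A B : set M) (k : nat) : set M :=
  match k with 0%nat => A | 1%nat => B | _ => set0 end.

Lemma bigcup_pair_seq {M} (A B : set M) : bigcup (pair_seq A B) = setU A B.
Proof.
  apply set_ext; intro x; unfold bigcup, setU; split.
  - intros [[|[|k]] Hk]; simpl in Hk; [left | right | contradiction]; exact Hk.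
  - intros [H | H]; [exists 0%nat | exists 1%nat]; exact H.
Qed.

Section ProbabilitySpace.

Context {M : Type} (S : set M -> Prop) (mu : set M -> R).
Hypothesis Hps : probability_space S mu.

Lemma measurable_setC (A : set M) : S A -> S (setC A).
Proof. destruct Hps as [[_ [HC _]] _]; apply HC. Qed.

Lemma measurable_set0 : S set0.
Proof.
  destruct Hps as [[HT _] _].
  replace (@set0 M) with (setC (@setT M)) by (apply set_ext; firstorder).
  apply measurable_setC, HT.
Qed.

Lemma measurable_pair_seq (A B : set M) : S A -> S B -> forall k, S (pair_seq A B k).
Proof. intros HA HB [|[|k]]; [exact HA | exact HB | exact measurable_set0]. Qed.

Lemma measurable_setU (A B : set M) : S A -> S B -> S (setU A B).
Proof.
  intros HA HB; destruct Hps as [[_ [_ Hcup]] _].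
  rewrite <- bigcup_pair_seq; apply Hcup, measurable_pair_seq; assumption.
Qed.

Lemma measurable_setI (A B : set M) : S A -> S B -> S (setI A B).
Proof.
  intros HA HB.
  replace (setI A B) with (setC (setU (setC A) (setC B))).
  - apply measurable_setC, measurable_setU; apply measurable_setC; assumption.
  - apply set_ext; intro x; unfold setC, setU, setI; tauto.
Qed.

Lemma measurable_setD (A B : set M) : S A -> S B -> S (setD A B).
Proof. intros HA HB; exact (measurable_setI A (setC B) HA (measurable_setC B HB)). Qed.

Lemma measure_nonneg (A : set M) : S A -> 0 <= mu A.
Proof. destruct Hps as [_ [[Hpos _] _]]; apply Hpos. Qed.

Lemma measure_disjoint_setU (A B : set M) : S A -> S B ->
  (forall x, A x -> B x -> False) -> mu (setU A B) = mu A + mu B.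
Proof.
  intros HA HB Hdis; destruct Hps as [_ [[_ [Hmu0 [_ Hadd]]] _]].
  assert (Hdisj : forall k l, k <> l ->
            forall x, pair_seq A B k x -> pair_seq A B l x -> False).
  { intros [|[|k]] [|[|l]] Hkl x; simpl; unfold set0; intros Hk Hl;
      first [congruence | contradiction | exact (Hdis x Hk Hl) | exact (Hdis x Hl Hk)]. }
  assert (Hpartial : forall N, (1 <= N)%nat ->
            sum_f_R0 (fun k => mu (pair_seq A B k)) N = mu A + mu B).
  { induction N as [|N IH]; intro HN; [lia|].
    destruct N as [|N]; [simpl; ring|].
    rewrite tech5, IH by lia; simpl; rewrite Hmu0; ring. }
  apply (uniqueness_sum (fun k => mu (pair_seq A B k))).
  - rewrite <- bigcup_pair_seq; apply Hadd; [apply measurable_pair_seq|]; assumption.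
  - intros eps Heps; exists 1%nat; intros N HN; unfold R_dist.
    rewrite Hpartial by lia; rewrite Rminus_diag, Rabs_R0; exact Heps.
Qed.

Lemma measure_split (A B : set M) : S A -> S B ->
  mu A = mu (setI A B) + mu (setD A B).
Proof.
  intros HA HB.
  rewrite <- measure_disjoint_setU;
    [| apply measurable_setI | apply measurable_setD | unfold setI, setD; tauto];
    try assumption.
  f_equal; apply set_ext; intro x; unfold setU, setI, setD; tauto.
Qed.

Lemma measure_mono (A B : set M) : S A -> S B -> subset A B -> mu A <= mu B.
Proof.
  intros HA HB Hsub.
  rewrite (measure_split B A HB HA).
  replace (setI B A) with A by (apply set_ext; intro x; unfold setI; firstorder).
  pose proof (measure_nonneg _ (measurable_setD B A HB HA)); lra.
Qed.

Lemma measure_lt1_of_disjoint (A B : set M) : S A -> S B -> 0 < mu B ->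
  (forall x, A x -> B x -> False) -> mu A < 1.
Proof.
  intros HA HB HBpos Hdis.
  destruct Hps as [[HT _] [[_ [_ [Hmu1 _]]] _]].
  pose proof (measure_disjoint_setU A B HA HB Hdis) as Hsum.
  pose proof (measure_mono (setU A B) setT (measurable_setU A B HA HB) HT
                (fun _ _ => I)).
  lra.
Qed.

(* Null sets; by completeness every subset of a null set is null. *)
Definition null (A : set M) : Prop := S A /\ mu A = 0.

Lemma null_subset (A B : set M) : null B -> subset A B -> null A.
Proof.
  intros [HB HB0] Hsub; destruct Hps as [_ [_ Hcomplete]].
  assert (HA : S A) by exact (Hcomplete A B HB HB0 Hsub).
  split; [exact HA|].
  pose proof (measure_mono A B HA HB Hsub); pose proof (measure_nonneg A HA); lra.
Qed.

Lemma null_setU (A B : set M) : null A -> null B -> null (setU A B).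
Proof.
  intros [HA HA0] HBnull.
  destruct (null_subset (setD B A) B HBnull (fun x Hx => proj1 Hx)) as [HD HD0].
  replace (setU A B) with (setU A (setD B A))
    by (apply set_ext; intro x; unfold setU, setD; tauto).
  split; [apply measurable_setU; assumption|].
  rewrite measure_disjoint_setU by (unfold setD; tauto || assumption); lra.
Qed.

Definition ae_subset (A B : set M) : Prop := null (setD A B).

Lemma ae_subset_refl (A : set M) : ae_subset A A.
Proof.
  apply (null_subset _ set0).
  - split; [exact measurable_set0 | apply Hps].
  - intros x [Hx Hnx]; contradiction.
Qed.

Lemma ae_subset_trans (A B C : set M) :
  ae_subset A B -> ae_subset B C -> ae_subset A C.
Proof.
  intros HAB HBC; apply (null_subset _ _ (null_setU _ _ HAB HBC)).
  intros x [HAx HnCx]; unfold setU, setD; destruct (classic (B x)); tauto.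
Qed.

Lemma ae_subset_reverse (A B : set M) : S A -> S B -> mu B <= mu A ->
  ae_subset A B -> ae_subset B A.
Proof.
  intros HA HB Hle [_ HAB0]; split; [apply measurable_setD; assumption|].
  pose proof (measure_split A B HA HB); pose proof (measure_split B A HB HA).
  pose proof (measure_nonneg _ (measurable_setD B A HB HA)).
  replace (setI B A) with (setI A B) in * by (apply set_ext; unfold setI; tauto).
  lra.
Qed.

Lemma ae_subset_of_full_ratio (A B : set M) : S A -> S B -> 0 < mu A ->
  1 <= mu (setI A B) / mu A -> ae_subset A B.
Proof.
  intros HA HB HApos Hratio; split; [apply measurable_setD; assumption|].
  assert (Hge : mu A <= mu (setI A B)).
  { apply (Rmult_le_compat_r (mu A)) in Hratio; [|lra].
    unfold Rdiv in Hratio; rewrite Rmult_assoc, Rinv_l, Rmult_1_r in Hratio by lra.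
    lra. }
  pose proof (measure_split A B HA HB).
  pose proof (measure_nonneg _ (measurable_setD A B HA HB)); lra.
Qed.

Definition preserves (g : M -> M) : Prop :=
  forall A, S A -> S (preimage g A) /\ mu (preimage g A) = mu A.

Lemma preserves_iterT (g : M -> M) (k : nat) : preserves g -> preserves (iterT k g).
Proof.
  intro Hg; induction k as [|k IH]; intros A HA; [split; [exact HA | reflexivity]|].
  change (preimage (iterT (Datatypes.S k) g) A) with (preimage (iterT k g) (preimage g A)).
  destruct (Hg A HA) as [HgA HmgA]; destruct (IH _ HgA) as [HkA HmkA].
  split; [exact HkA | congruence].
Qed.

Lemma preserves_null (g : M -> M) (A : set M) : preserves g -> null A -> null (preimage g A).
Proof. intros Hg [HA HA0]; destruct (Hg A HA) as [HgA Hm]; split; congruence. Qed.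

Lemma preserves_ae_subset (g : M -> M) (A B : set M) : preserves g ->
  ae_subset A B -> ae_subset (preimage g A) (preimage g B).
Proof. intro Hg; exact (preserves_null g (setD A B) Hg). Qed.

Lemma ae_subset_orbit (g : M -> M) (A : nat -> set M) (f : nat -> nat) (n : nat) :
  preserves g -> (forall i, (i < n)%nat -> (f i < n)%nat) ->
  (forall i, (i < n)%nat -> ae_subset (A i) (preimage g (A (f i)))) ->
  forall k i, (i < n)%nat -> ae_subset (A i) (preimage (iterT k g) (A (iterT k f i))).
Proof.
  intros Hg Hf Hstep k; induction k as [|k IH]; intros i Hi; [apply ae_subset_refl|].
  assert (Horbit : (iterT k f i < n)%nat).
  { clear IH; induction k as [|k IHk]; [exact Hi | apply Hf, IHk]. }
  apply (ae_subset_trans _ _ _ (IH i Hi)).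
  exact (preserves_ae_subset (iterT k g) _ _ (preserves_iterT g k Hg) (Hstep _ Horbit)).
Qed.

Lemma ae_invariant_of_ae_subset (g ginv : M -> M) (C : set M) :
  preserves g -> preserves ginv ->
  (forall x, g (ginv x) = x) -> (forall x, ginv (g x) = x) ->
  S C -> ae_subset C (preimage g C) -> null (symdiff (image g C) C).
Proof.
  intros Hg Hginv Hgginv Hginvg HC Hsub.
  destruct (Hg C HC) as [HgC HmgC].
  assert (Hback : ae_subset (preimage g C) C)
    by (apply ae_subset_reverse; [exact HC | exact HgC | lra | exact Hsub]).
  replace (symdiff (image g C) C)
    with (preimage ginv (symdiff C (preimage g C))).
  - apply preserves_null; [exact Hginv | apply null_setU; assumption].
  - apply set_ext; intro x; unfold preimage, symdiff, setU, setD, image.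
    rewrite Hgginv; split.
    + intros [[Hx Hnx] | [Hx Hnx]]; [left | right]; split; try assumption.
      * exists (ginv x); split; [exact Hx | apply Hgginv].
      * intros [y [Hy <-]]; apply Hnx; rewrite Hginvg; exact Hy.
    + intros [[[y [Hy <-]] Hnx] | [Hx Hnx]]; [left | right]; split.
      * rewrite Hginvg; exact Hy.
      * exact Hnx.
      * exact Hx.
      * intro Hy; apply Hnx; exists (ginv x); split; [exact Hy | apply Hgginv].
Qed.

End ProbabilitySpace.

(* Each level set of a nontrivial observation has measure < 1, since some
   other level set, disjoint from it, has positive measure. *)
Lemma level_measure_lt1 {M O : Type} (S : set M -> Prop) (mu : set M -> R)
  (Hps : probability_space S mu) (Phi : M -> O) (n : nat) (o : nat -> O) :
  nontrivial_finite_observation S mu Phi n o ->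
  forall c, (c < n)%nat -> mu (level Phi (o c)) < 1.
Proof.
  intros [Hn2 [Hinj [_ Hlevels]]] c Hc.
  set (c' := match c with 0%nat => 1%nat | _ => 0%nat end).
  assert (Hc' : (c' < n)%nat /\ c' <> c) by (unfold c'; destruct c; lia).
  apply (measure_lt1_of_disjoint S mu Hps _ (level Phi (o c')));
    [apply Hlevels, Hc | apply Hlevels, Hc' .. |].
  intros x Hx Hx'; apply (proj2 Hc'), Hinj; [apply Hc' | exact Hc | congruence].
Qed.

Lemma iterT_add {M} (f : M -> M) (p q : nat) (x : M) :
  iterT (p + q) f x = iterT p f (iterT q f x).
Proof. induction p as [|p IH]; simpl; [reflexivity | rewrite IH; reflexivity]. Qed.

Lemma iterT_cancel {M} (f g : M -> M) : (forall y, f (g y) = y) ->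
  forall k x, iterT k f (iterT k g x) = x.
Proof.
  intros Hfg k; induction k as [|k IH]; intro x; [reflexivity|].
  replace (iterT (Datatypes.S k) f) with (iterT (k + 1) f)
    by (f_equal; lia).
  rewrite iterT_add; simpl; rewrite Hfg; apply IH.
Qed.

Lemma Tpow_succ {M} (T Tinv : M -> M) : (forall y, T (Tinv y) = y) ->
  forall t x, Tpow T Tinv (t + 1) x = T (Tpow T Tinv t x).
Proof.
  intros HTTinv [|p|p] x.
  - reflexivity.
  - replace (Z.pos p + 1)%Z with (Z.pos (Pos.succ p)) by lia.
    cbn [Tpow]; rewrite Pos2Nat.inj_succ; reflexivity.
  - destruct (Pos.succ_pred_or p) as [-> | Hp].
    + simpl; rewrite HTTinv; reflexivity.
    + rewrite <- Hp; generalize (Pos.pred p); intro q.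
      replace (Z.neg (Pos.succ q) + 1)%Z with (Z.neg q) by lia.
      cbn [Tpow]; rewrite Pos2Nat.inj_succ; cbn [iterT]; rewrite HTTinv; reflexivity.
Qed.

Lemma pigeonhole (n : nat) (h : nat -> nat) :
  (forall k, (k <= n)%nat -> (h k < n)%nat) ->
  exists a b, (a < b <= n)%nat /\ h a = h b.
Proof.
  revert h; induction n as [|n IH]; intros h Hh.
  - specialize (Hh 0%nat (le_n 0)); lia.
  - destruct (classic (exists a, (a < Datatypes.S n)%nat /\ h a = h (Datatypes.S n)))
      as [[a [Ha E]] | Hnew].
    + exists a, (Datatypes.S n); split; [lia | exact E].
    + (* h(S n) is not repeated: remove it from the range and recurse *)
      assert (Hneq : forall k, (k <= n)%nat -> h k <> h (Datatypes.S n))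
        by (intros k Hk E; apply Hnew; exists k; split; [lia | exact E]).
      set (h' := fun k => if Nat.ltb (h k) (h (Datatypes.S n)) then h k else (h k - 1)%nat).
      destruct (IH h') as [a [b [Hab E]]].
      * intros k Hk; unfold h'.
        pose proof (Hh k ltac:(lia)); pose proof (Hh (Datatypes.S n) ltac:(lia)).
        pose proof (Hneq k Hk).
        destruct (Nat.ltb_spec (h k) (h (Datatypes.S n))); lia.
      * exists a, b; split; [lia|]; unfold h' in E.
        pose proof (Hneq a ltac:(lia)); pose proof (Hneq b ltac:(lia)).
        destruct (Nat.ltb_spec (h a) (h (Datatypes.S n)));
          destruct (Nat.ltb_spec (h b) (h (Datatypes.S n))); lia.
Qed.

Lemma periodic_point (n : nat) (f : nat -> nat) : (0 < n)%nat ->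
  (forall i, (i < n)%nat -> (f i < n)%nat) ->
  exists c K, (c < n)%nat /\ (1 <= K)%nat /\ iterT K f c = c.
Proof.
  intros Hn Hf.
  assert (Horbit : forall k, (iterT k f 0%nat < n)%nat)
    by (induction k as [|k IH]; [exact Hn | apply Hf, IH]).
  destruct (pigeonhole n (fun k => iterT k f 0%nat)) as [a [b [Hab E]]];
    [intros k _; apply Horbit|].
  exists (iterT a f 0%nat), (b - a)%nat; split; [apply Horbit | split; [lia|]].
  rewrite <- iterT_add; replace (b - a + a)%nat with b by lia; symmetry; exact E.
Qed.

Lemma bounded_choice (n : nat) (P : nat -> nat -> Prop) :
  (forall i, (i < n)%nat -> exists j, (j < n)%nat /\ P i j) ->
  exists f, forall i, (i < n)%nat -> (f i < n)%nat /\ P i (f i).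
Proof.
  intro Hex.
  exists (fun i => epsilon (inhabits 0%nat) (fun j => (i < n)%nat -> (j < n)%nat /\ P i j)).
  intros i Hi; apply (epsilon_spec (inhabits 0%nat)
                        (fun j => (i < n)%nat -> (j < n)%nat /\ P i j)); [|exact Hi].
  destruct (Hex i Hi) as [j Hj]; exists j; intros _; exact Hj.
Qed.

Section MeasurePreservingSystem.

Context {M : Type} (S : set M -> Prop) (mu : set M -> R) (T Tinv : M -> M).
Hypothesis Hps : probability_space S mu.
Hypothesis HT : bimeasurable_bijection S T Tinv.
Hypothesis Hmp : measure_preserving S mu T.

Lemma preserves_T : preserves S mu T.
Proof.
  destruct HT as [_ [HTTinv [HmT _]]].
  intros A HA; split; [apply HmT, HA|].
  rewrite <- (Hmp (preimage T A)) by (apply HmT, HA); f_equal.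
  apply set_ext; intro x; unfold image, preimage; split.
  - intros [y [Hy <-]]; exact Hy.
  - intro Hx; exists (Tinv x); rewrite HTTinv; split; [exact Hx | reflexivity].
Qed.

Lemma preserves_Tinv : preserves S mu Tinv.
Proof.
  destruct HT as [HTinvT [HTTinv [_ HmTinv]]].
  intros A HA; split; [apply HmTinv, HA|].
  rewrite <- (Hmp A HA); f_equal.
  apply set_ext; intro x; unfold image, preimage; split.
  - intro Hx; exists (Tinv x); rewrite HTTinv; split; [exact Hx | reflexivity].
  - intros [y [Hy <-]]; rewrite HTinvT; exact Hy.
Qed.

Lemma preserves_Tpow (t : Z) : preserves S mu (Tpow T Tinv t).
Proof.
  destruct t as [|p|p]; cbn [Tpow].
  - intros A HA; split; [exact HA | reflexivity].
  - apply preserves_iterT, preserves_T.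
  - apply preserves_iterT, preserves_Tinv.
Qed.

Lemma trans_prob_stationary (O : Type) (Phi : M -> O) (t : Z) (a b : O) :
  S (level Phi a) -> S (level Phi b) ->
  trans_prob mu T Tinv Phi t a b
  = mu (setI (level Phi a) (preimage T (level Phi b))) / mu (level Phi a).
Proof.
  intros Ha Hb; destruct HT as [_ [HTTinv [HmT _]]]; unfold trans_prob.
  replace (fun m => Phi (Tpow T Tinv t m) = a /\ Phi (Tpow T Tinv (t + 1) m) = b)
    with (preimage (Tpow T Tinv t) (setI (level Phi a) (preimage T (level Phi b))))
    by (apply set_ext; intro m; unfold preimage, setI, level;
        rewrite (Tpow_succ T Tinv HTTinv); tauto).
  change (fun m => Phi (Tpow T Tinv t m) = a) with (preimage (Tpow T Tinv t) (level Phi a)).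
  rewrite (proj2 (preserves_Tpow t _ Ha)),
          (proj2 (preserves_Tpow t _ (measurable_setI S mu Hps _ _ Ha (HmT _ Hb)))).
  reflexivity.
Qed.

Lemma certain_transition_ae_subset (O : Type) (Phi : M -> O) (t : Z) (a b : O) :
  S (level Phi a) -> S (level Phi b) -> 0 < mu (level Phi a) ->
  1 <= trans_prob mu T Tinv Phi t a b ->
  ae_subset S mu (level Phi a) (preimage T (level Phi b)).
Proof.
  intros Ha Hb Hpos Hcertain; destruct HT as [_ [_ [HmT _]]].
  rewrite trans_prob_stationary in Hcertain by assumption.
  apply ae_subset_of_full_ratio; [exact Hps | exact Ha | apply HmT, Hb | exact Hpos | exact Hcertain].
Qed.

Lemma iterT_ae_invariant (K : nat) (C : set M) :
  S C -> ae_subset S mu C (preimage (iterT K T) C) ->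
  null S mu (symdiff (image (iterT K T) C) C).
Proof.
  destruct HT as [HTinvT [HTTinv _]].
  apply (ae_invariant_of_ae_subset S mu Hps _ (iterT K Tinv)).
  - apply preserves_iterT, preserves_T.
  - apply preserves_iterT, preserves_Tinv.
  - apply iterT_cancel, HTTinv.
  - apply iterT_cancel, HTinvT.
Qed.

End MeasurePreservingSystem.

Theorem proposition1 (M : Type) (S : set M -> Prop) (mu : set M -> R)
  (T Tinv : M -> M)
  (Hps : probability_space S mu)
  (HT : bimeasurable_bijection S T Tinv)
  (Hmp : measure_preserving S mu T)
  (Herg : ergodic S mu T)
  (Hnoper : ~ exists (k : nat) (C : set M),
      le 1 k /\ S C /\ 0 < mu C /\ mu C < 1 /\
      mu (symdiff (image (iterT k T) C) C) = 0)
  (O : Type) (Phi : M -> O) (n : nat) (o : nat -> O)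
  (HPhi : nontrivial_finite_observation S mu Phi n o) :
  exists i, lt i n /\
    forall j, lt j n -> forall t : Z, trans_prob mu T Tinv Phi t (o i) (o j) < 1.
Proof.
  pose proof HPhi as [Hn2 [_ [_ Hlevels]]].
  apply NNPP; intro Hno_uncertain.
  assert (Hstep : forall i, (i < n)%nat -> exists j, (j < n)%nat /\
            ae_subset S mu (level Phi (o i)) (preimage T (level Phi (o j)))).
  { intros i Hi; apply NNPP; intro Hnone; apply Hno_uncertain.
    exists i; split; [exact Hi|]; intros j Hj t; apply Rnot_le_lt; intro Hcertain.
    apply Hnone; exists j; split; [exact Hj|].
    apply (certain_transition_ae_subset S mu T Tinv Hps HT Hmp _ _ t);
      [apply Hlevels.. | exact Hcertain]; assumption. }
  destruct (bounded_choice n _ Hstep) as [f Hf].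
  destruct (periodic_point n f) as [c [K [Hc [HK Hperiod]]]];
    [lia | intros i Hi; apply Hf, Hi|].
  pose proof (ae_subset_orbit S mu Hps T (fun i => level Phi (o i)) f n
                (preserves_T S mu T Tinv HT Hmp) (fun i Hi => proj1 (Hf i Hi))
                (fun i Hi => proj2 (Hf i Hi)) K c Hc) as Hcycle.
  rewrite Hperiod in Hcycle.
  destruct (Hlevels c Hc) as [HSc Hpos_c].
  apply Hnoper; exists K, (level Phi (o c)); repeat split; try assumption.
  - exact (level_measure_lt1 S mu Hps Phi n o HPhi c Hc).
  - exact (proj2 (iterT_ae_invariant S mu T Tinv Hps HT Hmp K _ HSc Hcycle)).
Qed.
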